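(* Let $\rho$ be an $n$-qubit density matrix and define $\vec z\in\mathbb{C}^n$ by $z_i=\langle e_i|\rho|0^n\rangle$. If $\langle0^n|\rho|0^n\rangle=2/3+c$ for some $c>0$, then every $n$-qubit pure product state $|\pi\rangle$ satisfies \[ \langle\pi|\rho|\pi\rangle\le\langle0^n|\rho|0^n\rangle+\min\Big\{3\|\vec z\|_2,\ \frac{\|\vec z\|_2^2}{c}\Big\}. \]
   Context: $|e_i\rangle$ denotes the $n$-qubit computational basis state with $|1\rangle$ in position $i$ and $|0\rangle$ elsewhere; $|0^n\rangle$ is the all-zeros basis state. *)

(* Complex scalars: an arbitrary numClosedFieldType C
   (e.g. the complex numbers complex R over a realType R). *)
From HB Require Import structures.
From mathcomp Require Import all_boot all_order all_algebra.
Set Implicit Arguments. Unset Strict Implicit. Unset Printing Implicit Defensive.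
Import Order.TTheory GRing.Theory Num.Theory.
Local Open Scope ring_scope.

(* Computational basis of n qubits: bit strings x : 'I_n -> bool. *)
Definition bits (n : nat) := {ffun 'I_n -> bool}.

(* An n-qubit operator, as a matrix indexed by bit strings:
   rho x y = <x| rho |y>. *)
Definition qop (C : numClosedFieldType) (n : nat) := bits n -> bits n -> C.

(* A vector of the n-qubit Hilbert space: v x = <x|v>. *)
Definition qvec (C : numClosedFieldType) (n : nat) := bits n -> C.

Definition braket (C : numClosedFieldType) n (u : qvec C n) (A : qop C n)
  (v : qvec C n) : C :=
  \sum_(x : bits n) \sum_(y : bits n) (u x)^* * A x y * v y.

Definition hermitian (C : numClosedFieldType) n (A : qop C n) : Prop :=
  forall x y, A y x = (A x y)^*.

Definition psd (C : numClosedFieldType) n (A : qop C n) : Prop :=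
  forall v : qvec C n, 0 <= braket v A v.

Definition trace (C : numClosedFieldType) n (A : qop C n) : C :=
  \sum_(x : bits n) A x x.

Definition density_matrix (C : numClosedFieldType) n (A : qop C n) : Prop :=
  [/\ hermitian A, psd A & trace A = 1].

(* |0^n> and |e_i> as bit strings *)
Definition zeros n : bits n := [ffun _ => false].
Definition e_ n (i : 'I_n) : bits n := [ffun j => j == i].

(* single-qubit unit vector a : bool -> C (a false = <0|a>, a true = <1|a>) *)
Definition unit_qubit (C : numClosedFieldType) (a : bool -> C) : Prop :=
  `|a false| ^+ 2 + `|a true| ^+ 2 = 1.

Definition product_state (C : numClosedFieldType) n (a : 'I_n -> bool -> C)
  : qvec C n := fun x => \prod_(i < n) a i (x i).

Definition norm2 (C : numClosedFieldType) n (z : 'I_n -> C) : C :=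
  sqrtC (\sum_(i < n) `|z i| ^+ 2).

(* Write |pi> = alpha |0^n> + |w> and p = <0^n|rho|0^n>.  The Schur complement of
   rho with respect to p is positive semidefinite, so <w|rho|w> - |X|^2/p is at most
   |w|^2 times its trace 1 - p - K/p, where X = <0^n|rho|w> and K is the squared
   norm of the off-diagonal part of the column rho|0^n>.  Splitting that column and
   w into weight-one and heavier strings, Cauchy-Schwarz bounds |X| by
   |z| |w_1| + |k| |w_2|.  For a product state the weights A = |alpha|^2 and
   B = |w_1|^2 satisfy A(1-A) <= B and 2A(1-A-B) <= (1-A)B, by induction on n.
   Eliminating the unknown heavier parts k and w_2 from the resulting real
   inequality leaves <pi|rho|pi> <= p + 2|z|t - (3c/2)t^2 with t = |w| <= 1, and
   the right-hand side is at most p + min(3|z|, |z|^2/c). *)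

From Pilot Require Import Defs.
From HB Require Import structures.
From mathcomp Require Import all_boot all_order all_algebra.
From mathcomp Require Import ring lra.
Set Implicit Arguments. Unset Strict Implicit. Unset Printing Implicit Defensive.
Import Order.TTheory GRing.Theory Num.Theory.
Local Open Scope ring_scope.

Section RealPart.
Variable C : numClosedFieldType.

(* The real elements of [C] form a real field, on which [lra] and [nra] work. *)
Record creal := CReal {creal_val : C; creal_valP : creal_val \is Num.real}.

HB.instance Definition _ := [isSub for creal_val].
HB.instance Definition _ := [Choice of creal by <:].
HB.instance Definition _ := [SubChoice_isSubIntegralDomain of creal by <:].
HB.instance Definition _ := [SubIntegralDomain_isSubField of creal by <:].

Let creal_norm (x : creal) : creal := CReal (normr_real (val x)).

Fact creal_le0_add (x y : creal) : 0 <= val x -> 0 <= val y -> 0 <= val (x + y).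
Proof. exact: addr_ge0. Qed.

Fact creal_le0_mul (x y : creal) : 0 <= val x -> 0 <= val y -> 0 <= val (x * y).
Proof. exact: mulr_ge0. Qed.

Fact creal_le0_anti (x : creal) : 0 <= val x -> val x <= 0 -> x = 0.
Proof. by move=> x_ge0 x_le0; apply/val_inj/le_anti/andP. Qed.

Fact creal_sub_ge0 (x y : creal) : (0 <= val (y - x)) = (val x <= val y).
Proof. exact: subr_ge0. Qed.

Fact creal_le0_total (x : creal) : (0 <= val x) || (val x <= 0).
Proof. exact: real_leVge (real0 _) (creal_valP x). Qed.

Fact creal_normN (x : creal) : creal_norm (- x) = creal_norm x.
Proof. by apply/val_inj; apply: normrN. Qed.

Fact creal_ge0_norm (x : creal) : 0 <= val x -> creal_norm x = x.
Proof. by move=> x_ge0; apply/val_inj/ger0_norm. Qed.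

Fact creal_lt_def (x y : creal) : (val x < val y) = (y != x) && (val x <= val y).
Proof. exact: lt_def. Qed.

HB.instance Definition _ := Num.IntegralDomain_isLeReal.Build creal
  creal_le0_add creal_le0_mul creal_le0_anti creal_sub_ge0 creal_le0_total
  creal_normN creal_ge0_norm creal_lt_def.

Definition creal_of (x : C) (x_ge0 : 0 <= x) : creal := CReal (ger0_real x_ge0).

Lemma creal_leE (x y : creal) : (x <= y) = (val x <= val y).
Proof. by []. Qed.

Lemma val_creal_min (x y : creal) : val (Num.min x y) = Num.min (val x) (val y).
Proof. by rewrite [LHS]fun_if. Qed.

End RealPart.

Section ScalarBounds.
Variable R : realFieldType.
Implicit Types p c f a b r t x Z k : R.

Lemma cross_term_le p a b r t Z k :
  0 <= p -> 0 <= a -> 0 <= b -> 0 <= r -> 0 <= t -> 0 <= Z -> 0 <= k ->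
  b ^+ 2 + r ^+ 2 = t ^+ 2 ->
  a ^+ 2 * t ^+ 2 <= b ^+ 2 -> 2 * a ^+ 2 * r ^+ 2 <= t ^+ 2 * b ^+ 2 ->
  2 * a * p * (Z * b + k * r) - (Z * r - k * b) ^+ 2
    <= 2 * p * Z * t + p ^+ 2 * t ^+ 2 / 2.
Proof.
move=> p0 a0 b0 r0 t0 Z0 k0 brt atb arb.
have [b_eq0|b_neq0] := eqVneq b 0.
  rewrite {}b_eq0 expr0n /= add0r in brt atb *.
  have ar0 : a * r = 0.
    by apply/eqP; rewrite -sqrf_eq0 eq_le sqr_ge0 andbT exprMn brt.
  have -> : 2 * a * p * (Z * 0 + k * r) = 2 * p * k * (a * r) by ring.
  have := sqr_ge0 (Z * r - k * 0).
  have : 0 <= p * Z * t by rewrite !mulr_ge0.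
  have : 0 <= (p * t) ^+ 2 / 2 by rewrite divr_ge0 ?sqr_ge0.
  rewrite ar0 exprMn; lra.
have b_gt0 : 0 < b by rewrite lt_def b_neq0.
(* After scaling by b^2 the left side is 2apZbt^2 + 2XY - Y^2 with X = apr and
   Y = bm, and 2XY - Y^2 <= X^2. *)
rewrite -(ler_pM2l (exprn_gt0 2 b_gt0)).
set m := k * b - Z * r.
have -> : b ^+ 2 * (2 * a * p * (Z * b + k * r) - (Z * r - k * b) ^+ 2)
    = 2 * a * p * Z * b * t ^+ 2 + 2 * (a * p * r) * (b * m) - (b * m) ^+ 2.
  by rewrite -brt /m; ring.
have at_le_b : a * t <= b by rewrite -(ler_pXn2r (n := 2)) ?nnegrE ?exprMn //; nra.
have : 2 * (a * p * r) * (b * m) - (b * m) ^+ 2 <= (a * p * r) ^+ 2.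
  by have := sqr_ge0 (a * p * r - b * m); nra.
have : (a * t) * (2 * p * Z * b * t) <= b * (2 * p * Z * b * t).
  by apply: ler_wpM2r; rewrite ?mulr_ge0.
have : (a * p * r) ^+ 2 <= p ^+ 2 * (t ^+ 2 * b ^+ 2) / 2.
  rewrite ler_pdivlMr //.
  have : 0 <= p ^+ 2 by rewrite sqr_ge0.
  rewrite !exprMn; nra.
lra.
Qed.

Lemma quadratic_bound p f a b r t x Z k :
  0 < p -> 0 <= a -> 0 <= b -> 0 <= r -> 0 <= t -> 0 <= x -> 0 <= Z -> 0 <= k ->
  a ^+ 2 + t ^+ 2 = 1 -> b ^+ 2 + r ^+ 2 = t ^+ 2 ->
  a ^+ 2 * t ^+ 2 <= b ^+ 2 -> 2 * a ^+ 2 * r ^+ 2 <= t ^+ 2 * b ^+ 2 ->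
  x <= Z * b + k * r ->
  f <= a ^+ 2 * p + 2 * a * x + x ^+ 2 / p + t ^+ 2 * (1 - p - (Z ^+ 2 + k ^+ 2) / p) ->
  f <= p + 2 * Z * t - (3 / 2 * p - 1) * t ^+ 2.
Proof.
move=> p_gt0 a0 b0 r0 t0 x0 Z0 k0 at1 brt atb arb x_le hf.
rewrite -(ler_pM2r p_gt0); apply: le_trans (ler_wpM2r (ltW p_gt0) hf) _.
have := cross_term_le (ltW p_gt0) a0 b0 r0 t0 Z0 k0 brt atb arb.
have y_sq : (Z * b + k * r) ^+ 2 = t ^+ 2 * (Z ^+ 2 + k ^+ 2) - (Z * r - k * b) ^+ 2.
  by rewrite -brt; ring.
have : 2 * a * p * x + x ^+ 2 <= 2 * a * p * (Z * b + k * r) + (Z * b + k * r) ^+ 2.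
  by apply: lerD; [apply: ler_wpM2l | apply: lerXn2r; rewrite ?nnegrE]; nra.
have -> : (a ^+ 2 * p + 2 * a * x + x ^+ 2 / p
             + t ^+ 2 * (1 - p - (Z ^+ 2 + k ^+ 2) / p)) * p
    = a ^+ 2 * p ^+ 2 + 2 * a * p * x + x ^+ 2
      + t ^+ 2 * p * (1 - p) - t ^+ 2 * (Z ^+ 2 + k ^+ 2).
  by field; rewrite gt_eqF.
nra.
Qed.

Lemma quadratic_le_min c Z t : 0 < c -> 0 <= Z -> 0 <= t <= 1 ->
  2 * Z * t - 3 / 2 * c * t ^+ 2 <= Num.min (3 * Z) (Z ^+ 2 / c).
Proof.
move=> c_gt0 Z0 /andP[t0 t1]; rewrite le_min; apply/andP; split; first nra.
have -> : Z ^+ 2 / c = (Z - c * t) ^+ 2 / c + 2 * Z * t - c * t ^+ 2.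
  by field; rewrite gt_eqF.
have : 0 <= (Z - c * t) ^+ 2 / c by rewrite divr_ge0 ?sqr_ge0 ?ltW.
nra.
Qed.

End ScalarBounds.

Section Weights.
Variable R : realFieldType.

Definition weight_invariant (A B : R) :=
  [/\ 0 <= A, 0 <= B, A + B <= 1, A * (1 - A) <= B &
      2 * A * (1 - A - B) <= (1 - A) * B].

Lemma weight_invariant_step A B u : weight_invariant A B -> 0 <= u <= 1 ->
  weight_invariant (A * u) (u * B + (1 - u) * A).
Proof.
move=> [A0 B0 AB AAB ABB] /andP[u0 u1]; split; try nra.
- have : 0 <= (1 - u) * A * (1 - u * A) by rewrite !mulr_ge0 //; nra.
  nra.
- have : 0 <= A * ((1 - u) * (1 - u * (A + B))) by rewrite !mulr_ge0 //; nra.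
  nra.
Qed.

(* For independent bits with P(bit i = 0) = u i, the two arguments are the
   probabilities of Hamming weight 0 and 1. *)
Lemma weight_invariant_prod n (u : 'I_n -> R) : (forall i, 0 <= u i <= 1) ->
  weight_invariant (\prod_i u i) (\sum_i (1 - u i) * \prod_(j | j != i) u j).
Proof.
elim: n u => [|n IHn] u u01.
  by rewrite big_ord0 big_ord0; split; lra.
have := weight_invariant_step (IHn _ (fun i => u01 (widen_ord (leqnSn n) i)))
                              (u01 ord_max).
rewrite big_ord_recr /= big_ord_recr /=; congr weight_invariant; congr (_ + _).
- rewrite mulr_sumr; apply: eq_bigr => i _.
  have max_neq : ord_max != widen_ord (leqnSn n) i.
    by rewrite -val_eqE /= neq_ltn ltn_ord orbT.
  rewrite [in RHS]big_mkcond big_ord_recr /= max_neq mulrCA [_ * u ord_max]mulrC.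
  congr (_ * (_ * _)); rewrite big_mkcond; apply: eq_bigr => j _.
  by rewrite -val_eqE.
- rewrite [in RHS]big_mkcond big_ord_recr /= eqxx mulr1.
  by congr (_ * _); apply: eq_bigr => j _; rewrite -val_eqE /= neq_ltn ltn_ord.
Qed.

End Weights.

Section Operators.
Variables (C : numClosedFieldType) (n : nat).
Implicit Types (A S : qop C n) (u v w : qvec C n).

Definition qapply A v : qvec C n := fun x => \sum_y A x y * v y.

Definition vanish_at (e : bits n) v : qvec C n :=
  fun x => if x == e then 0 else v x.

Definition add_delta v (e : bits n) (l : C) : qvec C n :=
  fun x => v x + (x == e)%:R * l.

Lemma sum_norm_sqr_ge0 (T : finType) (P : pred T) (F : T -> C) :
  0 <= \sum_(t | P t) `|F t| ^+ 2.
Proof. by rewrite sumr_ge0 // => t _; rewrite exprn_ge0. Qed.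

Lemma sum_delta (T : finType) (t0 : T) (F : T -> C) :
  \sum_t (t == t0)%:R * F t = F t0.
Proof.
rewrite (bigD1 t0) //= eqxx mul1r big1 ?addr0 // => t /negbTE->.
by rewrite mul0r.
Qed.

Lemma eq_braket u u' A v v' : u =1 u' -> v =1 v' ->
  braket u A v = braket u' A v'.
Proof. by move=> eu ev; apply: eq_bigr => x _; apply: eq_bigr => y _; rewrite eu ev. Qed.

Lemma braketE u A v : braket u A v = \sum_x (u x)^* * qapply A v x.
Proof.
by apply: eq_bigr => x _; rewrite mulr_sumr; apply: eq_bigr => y _; rewrite mulrA.
Qed.

Lemma qapply_add_delta A v e l x :
  qapply A (add_delta v e l) x = qapply A v x + A x e * l.
Proof.
rewrite /qapply /add_delta -(sum_delta e (fun y => A x y * l)) -big_split /=.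
by apply: eq_bigr => y _; ring.
Qed.

Lemma braket_add_delta u A e l :
  braket (add_delta u e l) A (add_delta u e l) =
  braket u A u + l^* * qapply A u e + (\sum_x (u x)^* * A x e) * l
    + l^* * A e e * l.
Proof.
rewrite !braketE.
under eq_bigr do rewrite qapply_add_delta /add_delta rmorphD rmorphM /= conjC_nat
  mulrDl -mulrA mulrDr.
rewrite !big_split sum_delta /= mulr_suml.
by under [X in _ + X + _]eq_bigr do rewrite mulrA; ring.
Qed.

Lemma hermitian_sum_conj A u (e : bits n) : Defs.hermitian A ->
  (qapply A u e)^* = \sum_x (u x)^* * A x e.
Proof.
move=> hA; rewrite rmorph_sum; apply: eq_bigr => x _.
by rewrite rmorphM /= (hA e x) mulrC.
Qed.

Lemma braket_pair A (x y : bits n) (a b : C) :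
  let v := fun z => (z == y)%:R * a + (z == x)%:R * b in
  braket v A v = a^* * (A y y * a + A y x * b) + b^* * (A x y * a + A x x * b).
Proof.
have sum_pair (F : bits n -> C) a' b' :
    \sum_z ((z == y)%:R * a' + (z == x)%:R * b') * F z = a' * F y + b' * F x.
  by under eq_bigr do rewrite mulrDl -!mulrA; rewrite big_split !sum_delta.
rewrite /= braketE.
under eq_bigr => z _.
  rewrite rmorphD !rmorphM /= !conjC_nat /qapply.
  under eq_bigr do rewrite mulrC.
  rewrite sum_pair.
  over.
by rewrite sum_pair; ring.
Qed.

Lemma psd_braket_le_trace S w : psd S ->
  braket w S w <= (\sum_x `|w x| ^+ 2) * trace S.
Proof.
move=> hS.
(* [q x y] is the form of [S] on conj(w x) |y> - conj(w y) |x>, and the sum of all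
   of them is 2 (|w|^2 tr S - <w|S|w>). *)
pose q x y := w x * (w x)^* * S y y + w y * (w y)^* * S x x
    - (w y)^* * (S y x * w x) - (w x)^* * (S x y * w y).
have : 0 <= \sum_x \sum_y q x y.
  apply: sumr_ge0 => x _; apply: sumr_ge0 => y _.
  have := hS (fun z => (z == y)%:R * (w x)^* + (z == x)%:R * - (w y)^*).
  by rewrite braket_pair rmorphN /= !conjCK; congr (_ <= _); rewrite /q; ring.
rewrite /q; under eq_bigr do rewrite !sumrB big_split /=.
rewrite !sumrB big_split /= -!big_distrlr exchange_big /= -!big_distrlr /=.
have braket_sum : \sum_x \sum_y (w x)^* * (S x y * w y) = braket w S w.
  by rewrite braketE; apply: eq_bigr => x _; rewrite mulr_sumr.
rewrite [X in _ - X - _]exchange_big /= !braket_sum -/(trace S).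
under [\sum_x _ * (w x)^*]eq_bigr do rewrite -normCK.
set N := \sum_x _; set b := braket w S w.
rewrite (_ : N * trace S + N * trace S - b - b = 2%:R * (N * trace S - b)); last by ring.
by rewrite pmulr_rge0 ?ltr0n // subr_ge0.
Qed.

Lemma braket_rank_one (d u : qvec C n) :
  braket u (fun x y => d x * (d y)^*) u = `|\sum_x (u x)^* * d x| ^+ 2.
Proof.
rewrite normCK rmorph_sum big_distrlr; apply: eq_bigr => x _.
by apply: eq_bigr => y _; rewrite rmorphM /= conjCK; ring.
Qed.

Lemma cauchy_schwarz_sqr (c d : qvec C n) :
  `|\sum_x c x * d x| ^+ 2 <= (\sum_x `|c x| ^+ 2) * (\sum_x `|d x| ^+ 2).
Proof.
(* The trace bound for the rank-one operator |d><d|. *)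
have psd_dd : psd (fun x y => d x * (d y)^*).
  by move=> v; rewrite braket_rank_one exprn_ge0.
have := psd_braket_le_trace (fun x => (c x)^*) psd_dd.
rewrite braket_rank_one /trace; under eq_bigr do rewrite conjCK.
under [\sum_x `|_| ^+ 2]eq_bigr do rewrite norm_conjC.
by under [in X in _ * X]eq_bigr do rewrite -normCK.
Qed.

Lemma cauchy_schwarz (P : pred (bits n)) (c d : qvec C n) :
  `|\sum_(x | P x) c x * d x|
    <= sqrtC (\sum_(x | P x) `|c x| ^+ 2) * sqrtC (\sum_(x | P x) `|d x| ^+ 2).
Proof.
have := cauchy_schwarz_sqr (fun x => if P x then c x else 0)
                           (fun x => if P x then d x else 0).
have mask (f : C -> C -> C) (F G : qvec C n) : f 0 0 = 0 ->
    \sum_x f (if P x then F x else 0) (if P x then G x else 0)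
    = \sum_(x | P x) f (F x) (G x).
  by move=> f0; rewrite [RHS]big_mkcond; apply: eq_bigr => x _; case: (P x).
rewrite (mask (fun s t => s * t)) ?mulr0 //.
rewrite (mask (fun s _ => `|s| ^+ 2) c c) ?normr0 ?expr0n //.
rewrite (mask (fun s _ => `|s| ^+ 2) d d) ?normr0 ?expr0n //= => cs.
rewrite -sqrtCM ?nnegrE ?sum_norm_sqr_ge0 // -(sqrCK (normr_ge0 _)).
by rewrite ler_sqrtC ?nnegrE ?exprn_ge0 ?mulr_ge0 ?sum_norm_sqr_ge0.
Qed.

Definition schur A (e : bits n) : qop C n :=
  fun x y => A x y - A x e * A e y / A e e.

Lemma braket_schur A e u : braket u (schur A e) u
  = braket u A u - (\sum_x (u x)^* * A x e) * qapply A u e / A e e.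
Proof.
rewrite /braket /qapply big_distrlr mulr_suml -sumrB; apply: eq_bigr => x _.
by rewrite mulr_suml -sumrB; apply: eq_bigr => y _; rewrite /schur /=; ring.
Qed.

Lemma schur_psd A e : Defs.hermitian A -> psd A -> 0 < A e e -> psd (schur A e).
Proof.
move=> hA pA e_gt0 u; rewrite braket_schur -hermitian_sum_conj //.
set X := qapply A u e; set p := A e e in e_gt0 *.
suff -> : braket u A u - X^* * X / p
    = braket (add_delta u e (- (X / p))) A (add_delta u e (- (X / p))) by [].
have p_conj : p^* = p by apply/geC0_conj/ltW.
rewrite braket_add_delta -hermitian_sum_conj // -/X -/p.
by rewrite rmorphN rmorphM fmorphV /= p_conj; field; rewrite gt_eqF.
Qed.

Lemma trace_schur A e : Defs.hermitian A ->
  trace (schur A e) = trace A - (\sum_x `|A x e| ^+ 2) / A e e.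
Proof.
move=> hA; rewrite /trace /schur mulr_suml -sumrB; apply: eq_bigr => x _.
by rewrite normCK -(hA x e).
Qed.

Lemma conj_cross_le (a X : C) : a^* * X + X^* * a <= 2 * `|a| * `|X|.
Proof.
have -> : a^* * X + X^* * a = 2 * 'Re (a^* * X).
  by rewrite ReE rmorphM /= conjCK; field.
rewrite -mulrA -(norm_conjC a) -normrM ler_pM2l ?ltr0n //.
exact: (leif_Re_Creal _).1.
Qed.

Lemma braket_add_delta_le A w e (a : C) :
  Defs.hermitian A -> psd A -> 0 < A e e ->
  braket (add_delta w e a) A (add_delta w e a)
    <= `|a| ^+ 2 * A e e + 2 * `|a| * `|qapply A w e| + `|qapply A w e| ^+ 2 / A e e
       + (\sum_x `|w x| ^+ 2)
         * (trace A - A e e - (\sum_(x | x != e) `|A x e| ^+ 2) / A e e).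
Proof.
move=> hA pA e_gt0; set X := qapply A w e; set p := A e e in e_gt0 *.
have := psd_braket_le_trace w (schur_psd hA pA e_gt0).
rewrite braket_schur trace_schur // -hermitian_sum_conj // -/X -/p.
rewrite [\sum_x `|A x e| ^+ 2](bigD1 e) //= -/p (ger0_norm (ltW e_gt0)).
rewrite (mulrC X^*) -normCK.
have -> : trace A - (p ^+ 2 + \sum_(x | x != e) `|A x e| ^+ 2) / p
    = trace A - p - (\sum_(x | x != e) `|A x e| ^+ 2) / p.
  by field; rewrite gt_eqF.
rewrite lerBlDl => schur_bd.
rewrite braket_add_delta -hermitian_sum_conj // -/X -/p.
have -> : braket w A w + a^* * X + X^* * a + a^* * p * a
    = `|a| ^+ 2 * p + (a^* * X + X^* * a) + braket w A w by rewrite normCK; ring.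
by rewrite -[X in _ <= X]addrA; apply: lerD (lerD (lexx _) (conj_cross_le a X)) schur_bd.
Qed.

Lemma braket_le_schur_split A v e :
  Defs.hermitian A -> psd A -> 0 < A e e ->
  braket v A v
    <= `|v e| ^+ 2 * A e e + 2 * `|v e| * `|qapply A (vanish_at e v) e|
       + `|qapply A (vanish_at e v) e| ^+ 2 / A e e
       + (\sum_x `|vanish_at e v x| ^+ 2)
         * (trace A - A e e - (\sum_(x | x != e) `|A x e| ^+ 2) / A e e).
Proof.
move=> hA pA e_gt0.
have split_v : v =1 add_delta (vanish_at e v) e (v e).
  move=> x; rewrite /add_delta /vanish_at.
  by case: eqP => [->|]; rewrite ?mul1r ?add0r ?mul0r ?addr0.
by rewrite (eq_braket A split_v split_v) braket_add_delta_le.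
Qed.

End Operators.

Section BitStrings.
Variables (C : numClosedFieldType) (n : nat).

Definition weight_one : {set bits n} := [set e_ i | i : 'I_n].

Definition weight_ge2 : pred (bits n) :=
  fun x => (x != zeros n) && (x \notin weight_one).

Lemma e_inj : injective (@e_ n).
Proof.
by move=> i j /(congr1 (fun x : bits n => x i)); rewrite !ffunE eqxx => /esym/eqP.
Qed.

Lemma e_neq_zeros i : e_ i != zeros n.
Proof. by apply/eqP => /(congr1 (fun x : bits n => x i)); rewrite !ffunE eqxx. Qed.

Lemma sum_weight_one (F : bits n -> C) : \sum_(x in weight_one) F x = \sum_i F (e_ i).
Proof. by rewrite big_imset //= => i j _ _; apply: e_inj. Qed.

Lemma sum_nonzero_bits (F : bits n -> C) :
  \sum_(x | x != zeros n) F x = \sum_i F (e_ i) + \sum_(x | weight_ge2 x) F x.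
Proof.
rewrite (bigID (mem weight_one)) /= -sum_weight_one; congr (_ + _).
apply: eq_bigl => x; rewrite andbC; case: imsetP => // -[i _ ->].
by rewrite e_neq_zeros.
Qed.

Lemma sum_bits (F : bits n -> C) :
  \sum_x F x = F (zeros n) + (\sum_i F (e_ i) + \sum_(x | weight_ge2 x) F x).
Proof. by rewrite (bigD1 (zeros n)) //= sum_nonzero_bits. Qed.

Lemma sum_vanish_at_zeros (F : bits n -> C -> C) (v : qvec C n) :
  (forall x, F x 0 = 0) ->
  \sum_x F x (vanish_at (zeros n) v x)
    = \sum_i F (e_ i) (v (e_ i)) + \sum_(x | weight_ge2 x) F x (v x).
Proof.
move=> F0; rewrite sum_bits /vanish_at eqxx F0 add0r.
under eq_bigr do rewrite (negbTE (e_neq_zeros _)).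
by congr (_ + _); apply: eq_bigr => x /andP[/negbTE-> _].
Qed.

Lemma cross_term_weight_split (rho : qop C n) (v : qvec C n) : Defs.hermitian rho ->
  `|qapply rho (vanish_at (zeros n) v) (zeros n)|
    <= sqrtC (\sum_i `|rho (e_ i) (zeros n)| ^+ 2) * sqrtC (\sum_i `|v (e_ i)| ^+ 2)
     + sqrtC (\sum_(x | weight_ge2 x) `|rho x (zeros n)| ^+ 2)
       * sqrtC (\sum_(x | weight_ge2 x) `|v x| ^+ 2).
Proof.
move=> hr; rewrite /qapply.
rewrite (sum_vanish_at_zeros (F := fun x y => rho (zeros n) x * y)) => [|x];
  last exact: mulr0.
have norm_rho x : `|rho (zeros n) x| = `|rho x (zeros n)| by rewrite hr norm_conjC.
apply: le_trans (ler_normD _ _) (lerD _ _).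
- rewrite -(sum_weight_one (fun x => rho (zeros n) x * v x)).
  apply: le_trans (cauchy_schwarz _ _ _) _.
  by rewrite !sum_weight_one; under eq_bigr do rewrite norm_rho.
- apply: le_trans (cauchy_schwarz _ _ _) _.
  by under eq_bigr do rewrite norm_rho.
Qed.

End BitStrings.

Section ProductStates.
Variables (C : numClosedFieldType) (n : nat) (a : 'I_n -> bool -> C).
Hypothesis unit_a : forall i, unit_qubit (a i).

Lemma norm_product_state x :
  `|product_state a x| ^+ 2 = \prod_i `|a i (x i)| ^+ 2.
Proof. by rewrite /product_state normr_prod prodrXl. Qed.

Lemma sum_norm_product_state : \sum_x `|product_state a x| ^+ 2 = 1.
Proof.
under eq_bigr do rewrite norm_product_state.
rewrite -(bigA_distr_bigA (fun i b => `|a i b| ^+ 2)) /=.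
by rewrite big1 // => i _; rewrite big_bool /= addrC; apply: unit_a.
Qed.

Lemma norm_product_state_zeros :
  `|product_state a (zeros n)| ^+ 2 = \prod_i `|a i false| ^+ 2.
Proof. by rewrite norm_product_state; apply: eq_bigr => i _; rewrite ffunE. Qed.

Lemma norm_product_state_e i : `|product_state a (e_ i)| ^+ 2
  = (1 - `|a i false| ^+ 2) * \prod_(j | j != i) `|a j false| ^+ 2.
Proof.
rewrite norm_product_state (bigD1 i) //= ffunE eqxx.
congr (_ * _); first by rewrite -(unit_a i) addrAC subrr add0r.
by apply: eq_bigr => j /negbTE ji; rewrite ffunE ji.
Qed.

Lemma product_state_weights :
  let A := `|product_state a (zeros n)| ^+ 2 in
  let B := \sum_i `|product_state a (e_ i)| ^+ 2 in
  A * (1 - A) <= B /\ 2 * A * (1 - A - B) <= (1 - A) * B.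
Proof.
pose u i := creal_of (exprn_ge0 2 (normr_ge0 (a i false))).
have u01 i : 0 <= u i <= 1.
  by rewrite !creal_leE /= exprn_ge0 //= -(unit_a i) lerDl exprn_ge0.
have := weight_invariant_prod u01; set P := \prod_i u i; set S := \sum_i _.
case=> _ _ _ h1 h2.
have eA : val P = `|product_state a (zeros n)| ^+ 2.
  by rewrite rmorph_prod norm_product_state_zeros.
have eB : val S = \sum_i `|product_state a (e_ i)| ^+ 2.
  rewrite rmorph_sum; apply: eq_bigr => i _.
  by rewrite rmorphM rmorphB rmorph1 rmorph_prod norm_product_state_e.
rewrite -eA -eB; split.
- exact: (h1 : val P * (1 - val P) <= val S).
- exact: (h2 : 2 * val P * (1 - val P - val S) <= (1 - val P) * val S).
Qed.

End ProductStates.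

(* [a] and [x] stand for |<0^n|pi>| and |<0^n|rho|w>|, [B] and [Rw] for the squared
   norms of [w] on weight-one and heavier strings, [Z2] and [k2] likewise for the
   column rho|0^n>. *)
Lemma scalar_bound (C : numClosedFieldType) (c f a x B Rw Z2 k2 : C) :
  let p := 2 / 3 + c in
  0 < c -> 0 <= f -> 0 <= a -> 0 <= x -> 0 <= B -> 0 <= Rw -> 0 <= Z2 -> 0 <= k2 ->
  a ^+ 2 + (B + Rw) = 1 ->
  a ^+ 2 * (1 - a ^+ 2) <= B -> 2 * a ^+ 2 * (1 - a ^+ 2 - B) <= (1 - a ^+ 2) * B ->
  x <= sqrtC Z2 * sqrtC B + sqrtC k2 * sqrtC Rw ->
  f <= a ^+ 2 * p + 2 * a * x + x ^+ 2 / p + (B + Rw) * (1 - p - (Z2 + k2) / p) ->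
  f <= p + Num.min (3 * sqrtC Z2) (Z2 / c).
Proof.
move=> p c_gt0 f_ge0 a_ge0 x_ge0 B_ge0 Rw_ge0 Z2_ge0 k2_ge0 norm1 wt1 wt2 x_le f_le.
have p_gt0 : 0 < p by rewrite addr_gt0 ?divr_gt0 ?ltr0n.
have s_ge0 : 0 <= B + Rw by rewrite addr_ge0.
have [b_ge0 r_ge0 t_ge0 Z_ge0 k_ge0] : [/\ 0 <= sqrtC B, 0 <= sqrtC Rw,
    0 <= sqrtC (B + Rw), 0 <= sqrtC Z2 & 0 <= sqrtC k2] by rewrite !sqrtC_ge0.
have t_le1 : sqrtC (B + Rw) <= 1.
  by rewrite -sqrtC1 ler_sqrtC ?nnegrE // -norm1 lerDr exprn_ge0.
have s_eq : B + Rw = 1 - a ^+ 2 by rewrite -norm1 addrAC subrr add0r.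
pose t := sqrtC (B + Rw).
have t_sq : t ^+ 2 = 1 - a ^+ 2 by rewrite sqrtCK s_eq.
have bound : f <= p + 2 * sqrtC Z2 * t - (3 / 2 * p - 1) * t ^+ 2.
  apply: (@quadratic_bound (creal C) (creal_of (ltW p_gt0)) (creal_of f_ge0)
    (creal_of a_ge0) (creal_of b_ge0) (creal_of r_ge0) (creal_of t_ge0)
    (creal_of x_ge0) (creal_of Z_ge0) (creal_of k_ge0)) => //.
  - by apply: val_inj; change (a ^+ 2 + t ^+ 2 = 1); rewrite t_sq addrC subrK.
  - by apply: val_inj; change (sqrtC B ^+ 2 + sqrtC Rw ^+ 2 = t ^+ 2); rewrite !sqrtCK.
  - by change (a ^+ 2 * t ^+ 2 <= sqrtC B ^+ 2); rewrite t_sq sqrtCK.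
  - change (2 * a ^+ 2 * sqrtC Rw ^+ 2 <= t ^+ 2 * sqrtC B ^+ 2).
    by rewrite t_sq !sqrtCK (_ : Rw = 1 - a ^+ 2 - B) // -s_eq [B + Rw]addrC addrK.
  - change (f <= a ^+ 2 * p + 2 * a * x + x ^+ 2 / p
        + t ^+ 2 * (1 - p - (sqrtC Z2 ^+ 2 + sqrtC k2 ^+ 2) / p)).
    by rewrite /t !sqrtCK.
have min_bound : 2 * sqrtC Z2 * t - 3 / 2 * c * t ^+ 2
    <= Num.min (3 * sqrtC Z2) (sqrtC Z2 ^+ 2 / c).
  rewrite -(val_creal_min (3 * creal_of Z_ge0)
                          (creal_of Z_ge0 ^+ 2 / creal_of (ltW c_gt0))).
  apply: (@quadratic_le_min (creal C) (creal_of (ltW c_gt0)) (creal_of Z_ge0)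
                            (creal_of t_ge0)) => //.
  by apply/andP; split; [exact: t_ge0 | exact: t_le1].
rewrite sqrtCK in min_bound; apply: le_trans bound _.
have -> : p + 2 * sqrtC Z2 * t - (3 / 2 * p - 1) * t ^+ 2
    = p + (2 * sqrtC Z2 * t - 3 / 2 * c * t ^+ 2) by rewrite /p; field.
by rewrite lerD2l.
Qed.

Theorem corollary4p7 (C : numClosedFieldType) (n : nat) (rho : qop C n)
  (c : C) :
  density_matrix rho ->
  0 < c ->
  rho (zeros n) (zeros n) = 2 / 3 + c ->
  forall a : 'I_n -> bool -> C,
    (forall i, unit_qubit (a i)) ->
    let z := fun i : 'I_n => rho (e_ i) (zeros n) in
    braket (product_state a) rho (product_state a)
      <= rho (zeros n) (zeros n)
         + Num.min (3 * norm2 z) (norm2 z ^+ 2 / c).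
Proof.
move=> [hr hp htr] c_gt0 rho00 a unit_a; cbv zeta.
set v := product_state a.
have p_gt0 : 0 < rho (zeros n) (zeros n) by rewrite rho00 addr_gt0 ?divr_gt0 ?ltr0n.
have [wt1 wt2] := product_state_weights unit_a.
have norm1 := sum_norm_product_state unit_a; rewrite sum_bits in norm1.
have := braket_le_schur_split v hr hp p_gt0.
rewrite htr sum_nonzero_bits (sum_vanish_at_zeros (F := fun _ y => `|y| ^+ 2)) => [|x];
  last by rewrite normr0 expr0n.
rewrite /norm2 sqrtCK rho00.
apply: scalar_bound; rewrite ?sum_norm_sqr_ge0 ?normr_ge0 //.
exact: cross_term_weight_split.
Qed.
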